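(* Let $X=(X(s))_{s\in\mathbb S}$, $\mathbb S\subset\mathbb R^2$, be a stationary spatial process and let $\mathcal D_X=(\mathcal D_X(s))_{s\in\mathbb S}$ be a positive damage function of $X$. For a region $\mathcal A\subset\mathbb S$ of finite positive Lebesgue measure $|\mathcal A|$ put $$L(\mathcal A,\mathcal D_X)=\frac{1}{|\mathcal A|}\int_{\mathcal A}\mathcal D_X(s)\,\mathrm ds,\qquad \mathcal R_1(\mathcal A,\mathcal D_X)=\mathrm{Var}\big(L(\mathcal A,\mathcal D_X)\big).$$ Then: (i) (invariance by translation) for every region $\mathcal A$ and every $v\in\mathbb R^2$ with $\mathcal A+v\subset\mathbb S$, $\mathcal R_1(\mathcal A+v,\mathcal D_X)=\mathcal R_1(\mathcal A,\mathcal D_X)$; (ii) (sub-additivity) for any two disjoint regions $\mathcal A_1,\mathcal A_2\subset\mathbb S$, $\mathcal R_1(\mathcal A_1\cup\mathcal A_2,\mathcal D_X)\le \mathcal R_1(\mathcal A_1,\mathcal D_X)+\mathcal R_1(\mathcal A_2,\mathcal D_X)$.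
   Context: A damage function of $X$ is a nonnegative process obtained pointwise from $X$, i.e. $\mathcal D_X(s)=g(X(s))$ for a fixed measurable function $g$ with values in $\mathbb R_+$ (for example $g(x)=(x-u)^+$); it is assumed that $\mathcal D_X$ is jointly measurable and square integrable so that the integrals and variances above are well defined. $\mathcal A+v=\{a+v:a\in\mathcal A\}$. *)

From HB Require Import structures.
From mathcomp Require Import all_boot all_order all_algebra.
From mathcomp Require Import all_classical all_reals all_analysis.
Set Implicit Arguments. Unset Strict Implicit. Unset Printing Implicit Defensive.
Import Order.TTheory GRing.Theory Num.Theory.
Local Open Scope classical_set_scope.
Local Open Scope ring_scope.

Definition leb2 (R : realType) :=
  ((@lebesgue_measure R) \x (@lebesgue_measure R))%E.

Arguments leb2 R : clear implicits.

Definition translate (R : realType) (A : set (R * R)) (v : R * R) : set (R * R) :=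
  [set a + v | a in A].

(* Strict stationarity of X on S: all finite-dimensional distributions
   (determined by their values on measurable rectangles) are invariant under
   every translation v that keeps the sites inside S. *)
Definition stationary d (Omega : measurableType d) (R : realType)
  (P : probability Omega R) (S : set (R * R)) (X : R * R -> Omega -> R) : Prop :=
  forall (n : nat) (s : 'I_n -> R * R) (v : R * R) (B : 'I_n -> set R),
    (forall i, S (s i)) -> (forall i, S (s i + v)) ->
    (forall i, measurable (B i)) ->
    P (\bigcap_(i in [set: 'I_n]) [set w | B i (X (s i + v) w)]) =
    P (\bigcap_(i in [set: 'I_n]) [set w | B i (X (s i) w)]).

Definition region (R : realType) (S A : set (R * R)) : Prop :=
  [/\ measurable A, A `<=` S, (0 < leb2 R A)%E & (leb2 R A < +oo)%E].

Definition Lavg d (Omega : measurableType d) (R : realType)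
  (D : R * R -> Omega -> R) (A : set (R * R)) : Omega -> R :=
  fun w => (fine (leb2 R A))^-1 * Rintegral (leb2 R) A (fun s => D s w).

Definition R1 d (Omega : measurableType d) (R : realType)
  (P : probability Omega R) (D : R * R -> Omega -> R) (A : set (R * R)) : \bar R :=
  'V_P[Lavg D A].

(* Write L(A) = M_A / |A| with M_A(w) = \int_A D(s, w) ds.  By Tonelli,
   E[M_A] = \int_A E[D(s)] ds and E[M_A^2] = \int_A \int_A E[D(s) D(t)] ds dt.
   These integrands only involve the joint law of (X(s), X(t)), which
   stationarity leaves unchanged under a common shift of s and t, and they are
   bounded by E[D(s)^2] + E[D(t)^2] = 2 E[D(s0)^2] < oo.
   (i) Lebesgue measure is translation invariant, so M_{A+v} is M_A computed for
   the shifted field D(. + v), whose first two moments are those of D.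
   (ii) For disjoint regions, L(A1 u A2) = a L(A1) + b L(A2) with
   a = |A1| / |A1 u A2| and b = 1 - a, and
   Var(a Y + b Z) = a Var Y + b Var Z - a b Var(Y - Z) <= Var Y + Var Z. *)

From HB Require Import structures.
From mathcomp Require Import all_boot all_order all_algebra.
From mathcomp Require Import all_classical all_reals all_analysis.
From mathcomp Require Import measurable_realfun ring lra.
Import Order.TTheory GRing.Theory Num.Theory.
Set Implicit Arguments. Unset Strict Implicit. Unset Printing Implicit Defensive.
Local Open Scope classical_set_scope.
Local Open Scope ring_scope.

HB.instance Definition _ (R : realType) := Measure.on (leb2 R).

Lemma sigma_finite_leb2 (R : realType) : sigma_finite setT (leb2 R).
Proof.
have /sigma_finiteP[F [TF ndF Foo]] := sigma_finiteT (@lebesgue_measure R).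
exists (fun n => F n `*` F n).
  rewrite -setXTT TF predeqE => -[x y]; split.
    move=> [/= [n _ Fnx] [k _ Fky]]; exists (maxn n k) => //; split.
    - by move: x Fnx; exact/subsetPset/ndF/leq_maxl.
    - by move: y Fky; exact/subsetPset/ndF/leq_maxr.
  by move=> [n _ []/= ? ?]; split; exists n.
move=> k; have [? ?] := Foo k.
split; first exact: measurableX.
by rewrite /leb2 product_measure1E// lte_mul_pinfty// ge0_fin_numE.
Qed.

HB.instance Definition _ (R : realType) :=
  Measure_isSigmaFinite.Build _ _ _ (leb2 R) (sigma_finite_leb2 R).

Section lebesgue_translation.
Context (R : realType).
Local Open Scope ereal_scope.

Lemma pushforward_lebesgue_measure_addr (c : R) (A : set R) : measurable A ->
  pushforward lebesgue_measure ((fun x => x + c)%R : _ -> measurableTypeR R) A =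
  lebesgue_measure A.
Proof.
move=> mA; apply/esym/lebesgue_measure_unique => //=; first exact: measurable_funD.
move=> _ _ /ocitvP[->|[[a b] /= ab ->]]; first by rewrite /pushforward !measure0.
rewrite /pushforward.
have -> : (fun x => x + c)%R @^-1` `]a, b]%classic = `](a - c)%R, (b - c)%R]%classic.
  by apply/seteqP; split => x /=; rewrite !in_itv/= ltrBlDr lerBrDr.
rewrite !lebesgue_measure_itv/= !lte_fin ab ltrD2r ab -!EFinB.
by congr (_%:E); lra.
Qed.

Local Notation RR := (measurableTypeR R * measurableTypeR R)%type.

Lemma measurable_addr2 (v : R * R) :
  measurable_fun [set: RR] ((fun p : R * R => p + v)%R : RR -> RR).
Proof.
apply/measurable_fun_pairP; split.
- exact: measurable_funD measurable_fst (measurable_cst v.1).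
- exact: measurable_funD measurable_snd (measurable_cst v.2).
Qed.

Lemma pushforward_leb2_addr (v : R * R) (A : set (R * R)) : measurable A ->
  pushforward (leb2 R) ((fun p => p + v)%R : RR -> RR) A = leb2 R A.
Proof.
move=> mA; apply/esym; rewrite [LHS]/leb2.
apply: product_measure_unique => //; first exact: measurable_addr2.
move=> mf A1 A2 mA1 mA2 /=; rewrite /pushforward.
have -> : (fun p => p + v)%R @^-1` (A1 `*` A2) =
    ((fun x => x + v.1)%R @^-1` A1) `*` ((fun x => x + v.2)%R @^-1` A2) by [].
rewrite /leb2 product_measure1E; last 2 first.
- by rewrite -[X in measurable X]setTI; exact: measurable_funD.
- by rewrite -[X in measurable X]setTI; exact: measurable_funD.
by congr (_ * _); exact: pushforward_lebesgue_measure_addr.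
Qed.

Lemma translateE (A : set (R * R)) (v : R * R) :
  translate A v = (fun p => p - v)%R @^-1` A.
Proof.
apply/seteqP; split => [_ [a Aa <-]|p Ap] /=; first by rewrite addrK.
by exists (p - v)%R => //; rewrite subrK.
Qed.

Lemma measurable_translate (A : set (R * R)) (v : R * R) : measurable A ->
  measurable (translate A v).
Proof.
by move=> mA; rewrite translateE -[X in measurable X]setTI; exact: measurable_addr2.
Qed.

Lemma leb2_translate (A : set (R * R)) (v : R * R) : measurable A ->
  leb2 R (translate A v) = leb2 R A.
Proof. by move=> mA; rewrite translateE; exact: pushforward_leb2_addr. Qed.

Lemma ge0_integral_translate (A : set (R * R)) (v : R * R) (f : R * R -> \bar R) :
  measurable A -> measurable_fun (translate A v) f ->
  (forall x, translate A v x -> 0 <= f x) ->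
  \int[leb2 R]_(s in translate A v) f s = \int[leb2 R]_(s in A) f (s + v)%R.
Proof.
move=> mA mf f0; set T := translate A v.
have -> : A = (fun p => p + v)%R @^-1` T.
  by apply/seteqP; split => [p Ap|p [a Aa /addIr <-//]]; exists p.
rewrite -(ge0_integral_pushforward (measurable_addr2 v)); last 3 first.
- exact: measurable_translate.
- exact: mf.
- by move=> x /set_mem; exact: f0.
have E B : measurable B -> B `<=` T ->
    pushforward (leb2 R) ((fun p => p + v)%R : RR -> RR) B = leb2 R B.
  by move=> mB _; exact: pushforward_leb2_addr.
by rewrite [RHS](eq_measure_integral (leb2 R) E) //; exact: measurable_addr2.
Qed.
End lebesgue_translation.

Section stationary_pairs.
Local Open Scope ereal_scope.
Context d (Omega : measurableType d) (R : realType) (P : probability Omega R).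
Variables (S : set (R * R)) (X : R * R -> Omega -> R).
Hypothesis mX : forall s, S s -> measurable_fun setT (X s).
Hypothesis stX : stationary P S X.

Lemma stationary_rectangle (s t v : R * R) (A B : set R) :
  S s -> S t -> S (s + v)%R -> S (t + v)%R -> measurable A -> measurable B ->
  P [set w | A (X (s + v)%R w) /\ B (X (t + v)%R w)] =
  P [set w | A (X s w) /\ B (X t w)].
Proof.
move=> Ss St Ssv Stv mA mB.
pose u (i : 'I_2) := if val i == 0%N then s else t.
pose C (i : 'I_2) := if val i == 0%N then A else B.
have pairE (x : 'I_2 -> R * R) : \bigcap_(i in [set: 'I_2]) [set w | C i (X (x i) w)] =
    [set w | A (X (x ord0) w) /\ B (X (x ord_max) w)].
  apply/seteqP; split => [w Cw|w [Aw Bw] i _].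
    by split; [exact: (Cw ord0 I) | exact: (Cw ord_max I)].
  have [->|->] : i = ord0 \/ i = ord_max.
    by case: i => -[|[|//]] ?; [left|right]; exact: val_inj.
  - exact: Aw.
  - exact: Bw.
have := @stX 2%N u v C; rewrite !pairE; apply.
- by move=> [[|[|//]]].
- by move=> [[|[|//]]].
- by move=> [[|[|//]]].
Qed.

Lemma stationary_integral_pair (s t v : R * R) (h : R * R -> \bar R) :
  S s -> S t -> S (s + v)%R -> S (t + v)%R ->
  measurable_fun setT h -> (forall z, 0 <= h z) ->
  \int[P]_w h (X (s + v)%R w, X (t + v)%R w) = \int[P]_w h (X s w, X t w).
Proof.
move=> Ss St Ssv Stv mh h0.
have mXst := measurable_fun_pair (mX Ss) (mX St).
have mXstv := measurable_fun_pair (mX Ssv) (mX Stv).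
have := ge0_integral_pushforward mXst P measurableT (measurable_funTS mh)
  (fun y _ => h0 y).
have := ge0_integral_pushforward mXstv P measurableT (measurable_funTS mh)
  (fun y _ => h0 y).
rewrite !preimage_setT => <- <-.
apply: eq_measure_integral => C mC _.
apply: (measure_unique _ (fun=> setT) (measurable_prod_measurableType _ _)) => //.
- move=> _ _ [A1 mA1 [B1 mB1 <-]] [A2 mA2 [B2 mB2 <-]]; rewrite -setXI.
  exists (A1 `&` A2); first exact: measurableI.
  by exists (B1 `&` B2) => //; exact: measurableI.
- by move=> _; exists setT => //; exists setT => //; rewrite setXTT.
- by rewrite bigcup_const.
- by move=> _ [A mA [B mB <-]]; exact: stationary_rectangle.
- by move=> _ /=; rewrite /pushforward preimage_setT probability_setT ltry.
Qed.
End stationary_pairs.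

Section ge0_le_integral_nomeas.
Local Open Scope ereal_scope.
Context d (T : measurableType d) (R : realType) (mu : {measure set T -> \bar R}).

(* The integral of a nonnegative function is a supremum over the simple
   functions below it, so monotonicity needs no measurability. *)
Lemma ge0_le_integral_nomeas (D : set T) (f1 f2 : T -> \bar R) :
  (forall x, D x -> 0 <= f1 x) -> (forall x, D x -> f1 x <= f2 x) ->
  \int[mu]_(x in D) f1 x <= \int[mu]_(x in D) f2 x.
Proof.
move=> f10 f12; rewrite (integral_mkcond D f1) (integral_mkcond D f2).
have f10' x : 0 <= (f1 \_ D) x by rewrite patchE; case: ifPn => // /set_mem/f10.
have f12' x : (f1 \_ D) x <= (f2 \_ D) x.
  by rewrite !patchE; case: ifPn => // /set_mem/f12.
rewrite !ge0_integralTE//; last by move=> x; exact: le_trans (f10' x) (f12' x).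
apply: ereal_sup_le => _ [h hf1 <-]; exists h => //= x.
exact: le_trans (hf1 x) (f12' x).
Qed.

End ge0_le_integral_nomeas.

Section tonelli_moments.
Local Open Scope ereal_scope.
Context d1 d2 (T : measurableType d1) (Omega : measurableType d2) (R : realType).
Variables (mu : {sigma_finite_measure set T -> \bar R})
  (P : {sigma_finite_measure set Omega -> \bar R}).
Implicit Types h : T -> Omega -> \bar R.

Lemma measurable_fun_integral_curry h :
  measurable_fun setT (fun p : T * Omega => h p.1 p.2) -> (forall s w, 0 <= h s w) ->
  measurable_fun setT (fun w => \int[mu]_s h s w).
Proof.
by move=> mh h0; exact: (measurable_fun_fubini_tonelli_G _ mh (fun p => h0 p.1 p.2)).
Qed.

Lemma fubini_tonelli_curry h :
  measurable_fun setT (fun p : T * Omega => h p.1 p.2) -> (forall s w, 0 <= h s w) ->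
  \int[P]_w \int[mu]_s h s w = \int[mu]_s \int[P]_w h s w.
Proof. by move=> mh h0; rewrite (fubini_tonelli _ mh (fun p => h0 p.1 p.2)). Qed.

Lemma integral_sqr_integral h :
  measurable_fun setT (fun p : T * Omega => h p.1 p.2) -> (forall s w, 0 <= h s w) ->
  \int[P]_w ((\int[mu]_s h s w) * (\int[mu]_s h s w)) =
  \int[mu]_s \int[mu]_t \int[P]_w (h s w * h t w).
Proof.
move=> mh h0.
have mh1 s : measurable_fun setT (h s).
  by have := measurableT_comp mh
    (measurable_fun_pair (measurable_cst s) (@measurable_id _ Omega setT)).
have mh2 w : measurable_fun setT (h^~ w).
  by have := measurableT_comp mh
    (measurable_fun_pair (@measurable_id _ T setT) (measurable_cst w)).
have I0 w : 0 <= \int[mu]_s h s w by apply: integral_ge0 => s _.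
transitivity (\int[P]_w \int[mu]_s (h s w * \int[mu]_t h t w)).
  by apply: eq_integral => w _; rewrite ge0_integralZr.
rewrite fubini_tonelli_curry; last 2 first.
- apply: emeasurable_funM => //.
  exact: measurableT_comp (measurable_fun_integral_curry mh h0) measurable_snd.
- by move=> s w; rewrite mule_ge0.
apply: eq_integral => s _.
transitivity (\int[P]_w \int[mu]_t (h s w * h t w)).
  by apply: eq_integral => w _; rewrite ge0_integralZl.
rewrite fubini_tonelli_curry//; last by move=> t w; rewrite mule_ge0.
by apply: emeasurable_funM => //; exact: measurableT_comp (mh1 s) measurable_snd.
Qed.

End tonelli_moments.

Section variance.
Local Open Scope ereal_scope.
Context d (Omega : measurableType d) (R : realType) (P : probability Omega R).

Lemma Lfun2_sqr_lty (Z : Omega -> R) : measurable_fun setT Z ->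
  \int[P]_w ((Z w ^+ 2)%:E) < +oo -> Z \in Lfun P 2%:E.
Proof.
move=> mZ Z2; rewrite inE; apply/andP; split; first by rewrite inE.
rewrite inE/= /finite_norm unlock /Lnorm poweR_lty//.
rewrite (eq_integral (fun w => (Z w ^+ 2)%:E))// => w _.
by rewrite /= powR_mulrn// real_normK ?num_real.
Qed.

Lemma ae_fin_num_sqr_lty (M : Omega -> \bar R) : measurable_fun setT M ->
  (forall w, 0 <= M w) -> \int[P]_w (M w * M w) < +oo ->
  {ae P, forall w, M w \is a fin_num}.
Proof.
move=> mM M0 M2.
have iM2 : P.-integrable setT (fun w => M w * M w).
  apply/integrableP; split; first exact: emeasurable_funM.
  by under eq_integral => w _ do rewrite gee0_abs ?mule_ge0//.
apply: filterS (integrable_ae measurableT iM2) => w /(_ I).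
by move: (M0 w); case: (M w).
Qed.

Lemma ae_eq_variance (Z Z' : Omega -> R) : measurable_fun setT Z ->
  measurable_fun setT Z' -> {ae P, forall w, Z w = Z' w} -> 'V_P[Z] = 'V_P[Z'].
Proof.
move=> mZ mZ' ZZ'.
have EZ : \int[P]_w (Z w)%:E = \int[P]_w (Z' w)%:E.
  apply: ae_eq_integral => //; try exact/measurable_EFinP.
  by apply: filterS ZZ' => w Zw _; rewrite /= Zw.
rewrite /variance !unlock EZ; set c := fine _.
apply: ae_eq_integral => //.
- by apply/measurable_EFinP; apply: measurable_funM; exact: measurable_funB.
- by apply/measurable_EFinP; apply: measurable_funM; exact: measurable_funB.
- apply: filterS ZZ' => w Zw _.
  by change (((Z w - c) * (Z w - c))%:E = ((Z' w - c) * (Z' w - c))%:E); rewrite Zw.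
Qed.

(* [M] may be [+oo] on a null set, where [fine] returns [0]. *)
Lemma varianceZ_fine (M : Omega -> \bar R) (c : R) : measurable_fun setT M ->
  (forall w, 0 <= M w) -> \int[P]_w (M w * M w) < +oo -> (0 <= c)%R ->
  'V_P[fun w => c * fine (M w)]%R =
  (c ^+ 2)%:E * \int[P]_w (M w * M w) - (c%:E * \int[P]_w M w) ^+ 2.
Proof.
move=> mM M0 M2 c0.
have Mfin := ae_fin_num_sqr_lty mM M0 M2.
have mfM : measurable_fun setT (fun w => fine (M w)) by exact: measurableT_comp.
have E2 : \int[P]_w ((fine (M w)) ^+ 2)%:E = \int[P]_w (M w * M w).
  apply: ae_eq_integral => //.
  - by apply/measurable_EFinP; exact: measurable_funX.
  - exact: emeasurable_funM.
  - by apply: filterS Mfin => w Mw _; rewrite expr2 EFinM fineK.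
have E1 : \int[P]_w (fine (M w))%:E = \int[P]_w M w.
  apply: ae_eq_integral => //; first exact/measurable_EFinP.
  by apply: filterS Mfin => w Mw _; rewrite fineK.
have cM2 : \int[P]_w (((c * fine (M w)) ^+ 2)%R)%:E =
    (c ^+ 2)%:E * \int[P]_w (M w * M w).
  under eq_integral => w _ do rewrite exprMn EFinM.
  rewrite ge0_integralZl_EFin ?E2 ?sqr_ge0//.
  - by move=> w _; rewrite lee_fin sqr_ge0.
  - by apply/measurable_EFinP; exact: measurable_funX.
rewrite varianceE; last first.
  apply: Lfun2_sqr_lty; first exact: measurable_funM.
  by rewrite cM2 lte_mul_pinfty// lee_fin sqr_ge0.
rewrite !unlock; congr (_ - _).
  by rewrite -cM2; apply: eq_integral => w _; rewrite /= expr2.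
congr (_ ^+ 2); under eq_integral => w _ do rewrite EFinM.
rewrite ge0_integralZl_EFin ?E1//; first by move=> w _; rewrite lee_fin fine_ge0.
exact/measurable_EFinP.
Qed.

Lemma Lfun2_scale_fine (M : Omega -> \bar R) (c : R) : measurable_fun setT M ->
  (forall w, 0 <= M w) -> \int[P]_w (M w * M w) < +oo ->
  (fun w => c * fine (M w))%R \in Lfun P 2%:E.
Proof.
move=> mM M0 M2.
have mfM : measurable_fun setT (fun w => fine (M w)) by exact: measurableT_comp.
apply: Lfun2_sqr_lty; first exact: measurable_funM.
apply: (@le_lt_trans _ _ (\int[P]_w ((c ^+ 2)%:E * (M w * M w)))).
  apply: ge0_le_integral => //.
  - by move=> w _; rewrite lee_fin sqr_ge0.
  - by apply/measurable_EFinP; apply: measurable_funX; exact: measurable_funM.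
  - by apply: emeasurable_funM => //; exact: emeasurable_funM.
  - move=> w _; move: (M0 w); case: (M w) => [r|_|//] /=.
    + by move=> _; rewrite -!EFinM lee_fin exprMn expr2.
    + by rewrite mulr0 expr0n /= mule_ge0 ?lee_fin ?sqr_ge0.
rewrite ge0_integralZl_EFin ?sqr_ge0 ?lte_mul_pinfty ?lee_fin ?sqr_ge0//.
- by move=> w _; rewrite mule_ge0.
- exact: emeasurable_funM.
Qed.

Lemma variance_convex_le (Y Z : Omega -> R) (a b : R) :
  Y \in Lfun P 2%:E -> Z \in Lfun P 2%:E -> (0 <= a)%R -> (0 <= b)%R ->
  (a + b = 1)%R ->
  'V_P[fun w => a * Y w + b * Z w]%R <= 'V_P[Y] + 'V_P[Z].
Proof.
move=> Y2 Z2 a0 b0 ab.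
have Pfin : P setT \is a fin_num := fin_num_measure P _ measurableT.
have Y1 := Lfun_subset12 Pfin Y2; have Z1 := Lfun_subset12 Pfin Z2.
have YZ1 := Lfun2_mul_Lfun1 Y2 Z2.
have aY2 : (a \o* Y)%R \in Lfun P 2%:E by rewrite Lfun_scale// ler1n.
have bZ2 : (b \o* Z)%R \in Lfun P 2%:E by rewrite Lfun_scale// ler1n.
have bZ1 := Lfun_subset12 Pfin bZ2; have YbZ1 := Lfun2_mul_Lfun1 Y2 bZ2.
have -> : (fun w => a * Y w + b * Z w)%R = ((a \o* Y) \+ (b \o* Z))%R.
  by apply: boolp.funext => w /=; rewrite mulrC [(b * _)%R]mulrC.
rewrite varianceD// !varianceZ// covarianceZl// covarianceZr//.
have := @variance_ge0 _ _ _ P (Y \- Z)%R; rewrite varianceB//.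
rewrite -(fineK (variance_fin_num Y2)) -(fineK (variance_fin_num Z2)).
rewrite -(fineK (covariance_fin_num Y1 Z1 YZ1)).
set vY := fine _; set vZ := fine _; set cYZ := fine _.
rewrite -!EFinM -?EFinN -!EFinD -?EFinB !lee_fin => vYZ.
have vY0 : (0 <= vY)%R by rewrite fine_ge0// variance_ge0.
have vZ0 : (0 <= vZ)%R by rewrite fine_ge0// variance_ge0.
have -> : b = (1 - a)%R by lra.
have a1 : (0 <= 1 - a)%R by lra.
have p1 : (0 <= a * (1 - a) * (vY + vZ - 2 * cYZ))%R by rewrite !mulr_ge0.
have p2 : (0 <= (1 - a) * vY)%R by rewrite mulr_ge0.
have p3 : (0 <= a * vZ)%R by rewrite mulr_ge0.
nra.
Qed.

End variance.

Definition mass d (Omega : measurableType d) (R : realType)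
    (Y : R * R -> Omega -> R) (A : set (R * R)) (w : Omega) : \bar R :=
  (\int[leb2 R]_(s in A) (Y s w)%:E)%E.

Lemma region_nonempty (R : realType) (S A : set (R * R)) : region S A -> A !=set0.
Proof.
case=> _ _ A0 _; apply/set0P/eqP => A0'.
by move: A0; rewrite A0' measure0 ltxx.
Qed.

Section mass_moments.
Local Open Scope ereal_scope.
Context d (Omega : measurableType d) (R : realType).
Variable P : {sigma_finite_measure set Omega -> \bar R}.
Variables (Y : R * R -> Omega -> R) (A : set (R * R)).
Hypothesis mA : measurable A.
Hypothesis mY : measurable_fun (A `*` setT) (fun p : (R * R) * Omega => Y p.1 p.2).
Hypothesis Y0 : forall s w, (0 <= Y s w)%R.

Let h s w : \bar R := if s \in A then (Y s w)%:E else 0.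

Let h0 s w : 0 <= h s w.
Proof. by rewrite /h; case: ifP; rewrite // lee_fin. Qed.

Let mh : measurable_fun setT (fun p : (R * R) * Omega => h p.1 p.2).
Proof.
have [+ _] := measurable_restrict (fun p : (R * R) * Omega => (Y p.1 p.2)%:E)
  (measurableX mA (@measurableT _ Omega)) (@measurableT _ ((R * R) * Omega)%type).
rewrite setTI => /(_ ((measurable_EFinP _ _).2 mY)).
apply: eq_measurable_fun => -[s w] _.
by rewrite /h patchE in_setX in_setT andbT.
Qed.

Let massE w : mass Y A w = \int[leb2 R]_s h s w.
Proof. by rewrite /mass integral_mkcond; apply: eq_integral => s _; rewrite patchE. Qed.

Lemma mass_ge0 w : 0 <= mass Y A w.
Proof. by apply: integral_ge0 => s _; rewrite lee_fin. Qed.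

Lemma measurable_mass : measurable_fun setT (mass Y A).
Proof.
rewrite (_ : mass Y A = fun w => \int[leb2 R]_s h s w); last exact/funext/massE.
exact: measurable_fun_integral_curry.
Qed.

Lemma measurable_mass_integrand w : measurable_fun A (fun s => (Y s w)%:E).
Proof.
have := measurableT_comp mh
  (measurable_fun_pair (@measurable_id _ (R * R)%type setT) (measurable_cst w)).
move/(measurable_funS measurableT (@subsetT _ A)).
by apply: eq_measurable_fun => s /set_mem sA; rewrite /h /= (mem_set sA).
Qed.

Lemma integral_mass :
  \int[P]_w mass Y A w = \int[leb2 R]_(s in A) \int[P]_w (Y s w)%:E.
Proof.
under eq_integral do rewrite massE.
rewrite fubini_tonelli_curry// [RHS]integral_mkcond.
apply/eq_integral => s _.
by rewrite patchE /h; case: ifP => // _; exact: integral0.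
Qed.

Lemma integral_mass_sqr :
  \int[P]_w (mass Y A w * mass Y A w) =
  \int[leb2 R]_(s in A) \int[leb2 R]_(t in A) \int[P]_w (Y s w * Y t w)%:E.
Proof.
under eq_integral do rewrite massE.
rewrite (@integral_sqr_integral _ _ _ _ _ (leb2 R) P h mh h0) [RHS]integral_mkcond.
apply/eq_integral => s _.
rewrite patchE /h; case: ifPn => sA; last first.
  under eq_integral do under eq_integral do rewrite mul0e.
  by under eq_integral do rewrite integral0; exact: integral0.
rewrite [RHS]integral_mkcond; apply/eq_integral => t _.
rewrite patchE; case: ifPn => tA; last first.
  by under eq_integral do rewrite mule0; exact: integral0.
by apply: eq_integral => w _; rewrite EFinM.
Qed.

End mass_moments.

Lemma LavgE d (Omega : measurableType d) (R : realType) (Y : R * R -> Omega -> R)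
    (A : set (R * R)) (w : Omega) :
  Lavg Y A w = (fine (leb2 R A))^-1 * fine (mass Y A w).
Proof. by []. Qed.

Lemma region_fine_gt0 (R : realType) (S A : set (R * R)) : region S A ->
  (0 < fine (leb2 R A))%R.
Proof. by case=> _ _ A0 Afin; apply: fine_gt0; rewrite A0 Afin. Qed.

Lemma fine_leb2_setU (R : realType) (S A1 A2 : set (R * R)) :
  region S A1 -> region S A2 -> A1 `&` A2 = set0 ->
  fine (leb2 R (A1 `|` A2)) = (fine (leb2 R A1) + fine (leb2 R A2))%R.
Proof.
case=> mA1 _ _ A1fin [mA2 _ _ A2fin] A12.
by rewrite measureU// fineD// ge0_fin_numE// ltW.
Qed.

Section damage.
Local Open Scope ereal_scope.
Context d (Omega : measurableType d) (R : realType) (P : probability Omega R).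
Variables (S : set (R * R)) (X : R * R -> Omega -> R) (g : R -> R).
Hypothesis mS : measurable S.
Hypothesis mX : forall s, S s -> measurable_fun setT (X s).
Hypothesis stX : stationary P S X.
Hypothesis mg : measurable_fun setT g.
Hypothesis g0 : forall x, (0 <= g x)%R.
Hypothesis mgX : measurable_fun (S `*` setT) (fun p : (R * R) * Omega => g (X p.1 p.2)).
Hypothesis gX2 : forall s, S s -> \int[P]_w ((g (X s w)) ^+ 2)%:E < +oo.

Let D s w := g (X s w).

Let D0 s w : (0 <= D s w)%R. Proof. exact: g0. Qed.

Lemma measurable_damage (A : set (R * R)) : measurable A -> A `<=` S ->
  measurable_fun (A `*` setT) (fun p : (R * R) * Omega => D p.1 p.2).
Proof.
move=> mA AS; apply: measurable_funS mgX => //; first exact: measurableX.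
by move=> [s w] [/= /AS].
Qed.

Lemma integral_damage_pair_shift (s t v : R * R) (h : R * R -> \bar R) :
  S s -> S t -> S (s + v)%R -> S (t + v)%R ->
  measurable_fun setT h -> (forall x y, (0 <= x)%R -> (0 <= y)%R -> 0 <= h (x, y)) ->
  \int[P]_w h (D (s + v)%R w, D (t + v)%R w) = \int[P]_w h (D s w, D t w).
Proof.
move=> Ss St Ssv Stv mh h0.
have mgg : measurable_fun setT (fun z : R * R => (g z.1, g z.2)).
  by apply: measurable_fun_pair; exact: measurableT_comp.
exact: (@stationary_integral_pair _ _ _ P S X mX stX s t v _ Ss St Ssv Stv
  (measurableT_comp mh mgg) (fun z => h0 _ _ (g0 _) (g0 _))).
Qed.

Lemma integral_damage_mul_le (s t s0 : R * R) : S s -> S t -> S s0 ->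
  \int[P]_w (D s w * D t w)%:E <=
  \int[P]_w ((D s0 w) ^+ 2)%:E + \int[P]_w ((D s0 w) ^+ 2)%:E.
Proof.
move=> Ss St Ss0.
have mD2 u : S u -> measurable_fun setT (fun w => ((D u w) ^+ 2)%:E).
  move=> Su; apply/measurable_EFinP/measurable_funX.
  exact: measurableT_comp mg (mX Su).
have sqrD u : S u -> \int[P]_w ((D u w) ^+ 2)%:E = \int[P]_w ((D s0 w) ^+ 2)%:E.
  move=> Su; have u0u : (s0 + (u - s0))%R = u by rewrite addrC subrK.
  have := @integral_damage_pair_shift s0 s0 (u - s0)%R (fun z => (z.1 ^+ 2)%:E) Ss0 Ss0.
  rewrite u0u; apply=> // [|x y _ _]; last by rewrite lee_fin sqr_ge0.
  by apply/measurable_EFinP/measurable_funX; exact: measurable_fst.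
rewrite -{1}(sqrD _ Ss) -(sqrD _ St) -ge0_integralD//; last 4 first.
- by move=> w _; rewrite lee_fin sqr_ge0.
- exact: mD2.
- by move=> w _; rewrite lee_fin sqr_ge0.
- exact: mD2.
apply: ge0_le_integral => //.
- by move=> w _; rewrite lee_fin mulr_ge0.
- by apply/measurable_EFinP/measurable_funM; exact: measurableT_comp mg (mX _).
- by apply: emeasurable_funD; [exact: mD2|exact: mD2].
- by move=> w _; rewrite lee_fin; have := D0 s w; have := D0 t w; nra.
Qed.

Lemma mass_sqr_lty (A : set (R * R)) : region S A ->
  \int[P]_w (mass D A w * mass D A w) < +oo.
Proof.
move=> rA; have [s0 As0] := region_nonempty rA; case: rA => mA AS _ Afin.
have Ss0 := AS _ As0.
set k := \int[P]_w ((D s0 w) ^+ 2)%:E + \int[P]_w ((D s0 w) ^+ 2)%:E.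
have k0 : 0 <= k by rewrite adde_ge0// integral_ge0// => w _; rewrite lee_fin sqr_ge0.
have kfin : k < +oo by rewrite lte_add_pinfty// gX2.
rewrite (integral_mass_sqr P mA (measurable_damage mA AS) D0).
apply: (@le_lt_trans _ _ (\int[leb2 R]_(s in A) \int[leb2 R]_(t in A) k)).
  apply: ge0_le_integral_nomeas => [s _|s As].
    by apply: integral_ge0 => t _; apply: integral_ge0 => w _; rewrite lee_fin mulr_ge0.
  apply: ge0_le_integral_nomeas => [t _|t At].
    by apply: integral_ge0 => w _; rewrite lee_fin mulr_ge0.
  exact: integral_damage_mul_le (AS _ As) (AS _ At) Ss0.
have intA c : \int[leb2 R]_(t in A) cst c t = c * leb2 R A by rewrite integral_cst.
have kA : k * leb2 R A \is a fin_num by rewrite fin_numM// ge0_fin_numE.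
by rewrite (intA k) (intA (k * leb2 R A)) lte_mul_pinfty// mule_ge0.
Qed.

Lemma measurable_damage_shift (A : set (R * R)) (v : R * R) : measurable A ->
  (forall s, A s -> S (s + v)%R) ->
  measurable_fun (A `*` setT) (fun p : (R * R) * Omega => D (p.1 + v)%R p.2).
Proof.
move=> mA SAv.
have sh : measurable_fun setT (fun p : (R * R) * Omega => ((p.1 + v)%R, p.2)).
  apply: measurable_fun_pair => //.
  exact: measurableT_comp (measurable_addr2 v) measurable_fst.
have -> : (fun p : (R * R) * Omega => D (p.1 + v)%R p.2) =
    (fun p => g (X p.1 p.2)) \o (fun p => ((p.1 + v)%R, p.2)) by [].
apply: (measurable_comp (F := S `*` setT)) => //.
- exact: measurableX.
- by move=> _ [[s w] [/= As _] <-]; split => //=; exact: SAv.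
- exact: measurable_funS sh.
Qed.

Lemma integral_mass_shift (A : set (R * R)) (v : R * R) : measurable A -> A `<=` S ->
  (forall s, A s -> S (s + v)%R) ->
  \int[P]_w mass (fun s => D (s + v)%R) A w = \int[P]_w mass D A w.
Proof.
move=> mA AS SAv.
rewrite (integral_mass P mA (measurable_damage_shift mA SAv) (fun s => D0 (s + v)%R)).
rewrite (integral_mass P mA (measurable_damage mA AS) D0).
apply/eq_integral => s /set_mem As.
apply: (@integral_damage_pair_shift s s v (fun z => z.1%:E)
  (AS _ As) (AS _ As) (SAv _ As) (SAv _ As)).
- by apply/measurable_EFinP; exact: measurable_fst.
- by move=> x y x0 _; rewrite lee_fin.
Qed.

Lemma integral_mass_sqr_shift (A : set (R * R)) (v : R * R) : measurable A ->
  A `<=` S -> (forall s, A s -> S (s + v)%R) ->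
  \int[P]_w (mass (fun s => D (s + v)%R) A w * mass (fun s => D (s + v)%R) A w) =
  \int[P]_w (mass D A w * mass D A w).
Proof.
move=> mA AS SAv.
rewrite (integral_mass_sqr P mA (measurable_damage_shift mA SAv) (fun s => D0 (s + v)%R)).
rewrite (integral_mass_sqr P mA (measurable_damage mA AS) D0).
apply/eq_integral => s /set_mem As; apply/eq_integral => t /set_mem At.
apply: (@integral_damage_pair_shift s t v (fun z => (z.1 * z.2)%:E)
  (AS _ As) (AS _ At) (SAv _ As) (SAv _ At)).
- apply/measurable_EFinP/measurable_funM.
  + exact: measurable_fst.
  + exact: measurable_snd.
- by move=> x y x0 y0; rewrite lee_fin mulr_ge0.
Qed.

Lemma R1_translate (A : set (R * R)) (v : R * R) :
  region S A -> translate A v `<=` S -> R1 P D (translate A v) = R1 P D A.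
Proof.
move=> rA AvS; have M2 := mass_sqr_lty rA; case: rA => mA AS _ _.
have SAv s : A s -> S (s + v)%R by move=> As; apply: AvS; exists s.
pose Dv s w := D (s + v)%R w.
have Dv0 s w : (0 <= Dv s w)%R by exact: D0.
have mTA := measurable_translate v mA.
have massE w : mass D (translate A v) w = mass Dv A w.
  rewrite /mass ge0_integral_translate//.
  - exact: measurable_mass_integrand mTA (measurable_damage mTA AvS) w.
  - by move=> s _; rewrite lee_fin.
have M2v : \int[P]_w (mass Dv A w * mass Dv A w) < +oo.
  by rewrite (integral_mass_sqr_shift mA AS SAv).
have c0 : (0 <= (fine (leb2 R A))^-1)%R by rewrite invr_ge0 fine_ge0.
rewrite /R1 (funext (LavgE D _)) (funext (LavgE D A)).
rewrite (leb2_translate v mA) (funext massE).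
have mMv := measurable_mass mA (measurable_damage_shift mA SAv) Dv0.
have mM := measurable_mass mA (measurable_damage mA AS) D0.
rewrite (varianceZ_fine mMv (mass_ge0 _ Dv0) M2v c0).
rewrite (varianceZ_fine mM (mass_ge0 _ D0) M2 c0).
by rewrite (integral_mass_shift mA AS SAv) (integral_mass_sqr_shift mA AS SAv).
Qed.

Lemma measurable_Lavg (A : set (R * R)) : measurable A -> A `<=` S ->
  measurable_fun setT (Lavg D A).
Proof.
move=> mA AS; rewrite (funext (LavgE D A)); apply: measurable_funM => //.
exact: measurableT_comp (measurable_mass mA (measurable_damage mA AS) D0).
Qed.

Lemma Lavg_Lfun2 (A : set (R * R)) : region S A -> Lavg D A \in Lfun P 2%:E.
Proof.
move=> rA; have M2 := mass_sqr_lty rA; case: rA => mA AS _ _.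
rewrite (funext (LavgE D A)).
exact: Lfun2_scale_fine (measurable_mass mA (measurable_damage mA AS) D0)
  (mass_ge0 _ D0) M2.
Qed.

Lemma mass_setU (A1 A2 : set (R * R)) (w : Omega) : measurable A1 -> measurable A2 ->
  A1 `|` A2 `<=` S -> A1 `&` A2 = set0 ->
  mass D (A1 `|` A2) w = mass D A1 w + mass D A2 w.
Proof.
move=> mA1 mA2 AS A12; have mA : measurable (A1 `|` A2) by exact: measurableU.
rewrite /mass ge0_integral_setU//.
- exact: measurable_mass_integrand mA (measurable_damage mA AS) w.
- by move=> s _; rewrite lee_fin.
- by rewrite disj_set2E A12.
Qed.

Lemma Lavg_setU_ae (A1 A2 : set (R * R)) :
  region S A1 -> region S A2 -> A1 `&` A2 = set0 ->
  {ae P, forall w, Lavg D (A1 `|` A2) w =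
    fine (leb2 R A1) / fine (leb2 R (A1 `|` A2)) * Lavg D A1 w +
    fine (leb2 R A2) / fine (leb2 R (A1 `|` A2)) * Lavg D A2 w}%R.
Proof.
move=> rA1 rA2 A12; have mU := fine_leb2_setU rA1 rA2 A12.
have m1 := region_fine_gt0 rA1; have m2 := region_fine_gt0 rA2.
have M21 := mass_sqr_lty rA1; have M22 := mass_sqr_lty rA2.
case: rA1 => mA1 A1S _ _; case: rA2 => mA2 A2S _ _.
have AS : A1 `|` A2 `<=` S by move=> s [/A1S|/A2S].
have fin1 := ae_fin_num_sqr_lty (measurable_mass mA1 (measurable_damage mA1 A1S) D0)
  (mass_ge0 _ D0) M21.
have fin2 := ae_fin_num_sqr_lty (measurable_mass mA2 (measurable_damage mA2 A2S) D0)
  (mass_ge0 _ D0) M22.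
apply: filterS2 fin1 fin2 => w M1w M2w.
rewrite !LavgE mU (mass_setU w mA1 mA2 AS A12) (fineD M1w M2w).
by field; rewrite !gt_eqF// addr_gt0.
Qed.

Lemma R1_setU_le (A1 A2 : set (R * R)) :
  region S A1 -> region S A2 -> A1 `&` A2 = set0 ->
  R1 P D (A1 `|` A2) <= R1 P D A1 + R1 P D A2.
Proof.
move=> rA1 rA2 A12; have mU := fine_leb2_setU rA1 rA2 A12.
have m1 := region_fine_gt0 rA1; have m2 := region_fine_gt0 rA2.
have [mA1 A1S _ _] := rA1; have [mA2 A2S _ _] := rA2.
have mA : measurable (A1 `|` A2) by exact: measurableU.
have AS : A1 `|` A2 `<=` S by move=> s [/A1S|/A2S].
rewrite /R1 (ae_eq_variance (measurable_Lavg mA AS) _ (Lavg_setU_ae rA1 rA2 A12));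
  last first.
  by apply: measurable_funD; apply: measurable_funM => //; exact: measurable_Lavg.
apply: variance_convex_le; [exact: Lavg_Lfun2|exact: Lavg_Lfun2| | |].
- by rewrite mU divr_ge0 ?ltW ?addr_gt0.
- by rewrite mU divr_ge0 ?ltW ?addr_gt0.
- by rewrite -mulrDl mU divff// gt_eqF// addr_gt0.
Qed.

End damage.

Theorem theorem1 (d : measure_display) (Omega : measurableType d) (R : realType)
  (P : probability Omega R) (S : set (R * R)) (X : R * R -> Omega -> R)
  (g : R -> R) :
  measurable S ->
  (forall s, S s -> measurable_fun setT (X s)) ->
  stationary P S X ->
  measurable_fun setT g ->
  (forall x, 0 <= g x) ->
  measurable_fun (S `*` setT) (fun p : (R * R) * Omega => g (X p.1 p.2)) ->
  (forall s, S s -> (\int[P]_w ((g (X s w)) ^+ 2)%:E < +oo)%E) ->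
  let D := fun s w => g (X s w) in
  (forall (A : set (R * R)) (v : R * R),
      region S A -> translate A v `<=` S ->
      R1 P D (translate A v) = R1 P D A) /\
  (forall A1 A2 : set (R * R),
      region S A1 -> region S A2 -> A1 `&` A2 = set0 ->
      (R1 P D (A1 `|` A2) <= R1 P D A1 + R1 P D A2)%E).
Proof.
move=> mS mX stX mg g0 mgX gX2 D.
split=> [A v rA AvS | A1 A2 rA1 rA2 A12].
- exact: (R1_translate mS mX stX mg g0 mgX gX2 rA AvS).
- exact: (R1_setU_le mS mX stX mg g0 mgX gX2 rA1 rA2 A12).
Qed.
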